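(* There is an absolute constant $C$ such that for every integer $r\ge 10$ there exists an integer $d\le C r^4\log r$ (i.e. $d\in O(r^4\log r)$) such that the following holds for every integer $k\ge 1$. Let $G$ be a $k\times k$ pseudogrid with grid-partition $\mathcal{P}:=\{V(P_\mu):\mu\in\mathrm{VE}(G_k)\}$ and let $\varphi$ be a vertex colouring of $G$ such that for every $A\subseteq\varphi(V(G))$, $|\varphi_{\mathcal{P}}^{-1}(A)\cap\mathrm{VE}(\mathrm{int}_r(G_k))|\ge d|A|$. Then there exists $S\subseteq\mathrm{int}_r(G)$ such that (i) $|\varphi^{-1}(\alpha)\cap S|=2$ for each $\alpha\in\varphi(V(G))$; and (ii) $|\tilde{B}_r(v)\cap S|\le 2$ for each $v\in S$.
   Context: The grid $G_k$ has vertex set $\{1,\dots,k\}^2$, with $(i_1,j_1)$ and $(i_2,j_2)$ adjacent iff $|i_1-i_2|+|j_1-j_2|=1$. For a graph $H$, $\mathrm{VE}(H):=V(H)\cup E(H)$. A $k\times k$ pseudogrid is any graph obtained from $G_k$ as follows: each edge $vw$ is replaced by a path $\overline{P}_{vw}$ with endpoints $v,w$ (subdividing $vw$ zero or more times); each vertex $v=(i,j)$ of degree $4$ is replaced by a nonempty path $P_v$: if $P_v$ has one vertex it plays the role of $v$; otherwise its endpoints $p,q$ are attached, $p$ to the paths $\overline{P}_{vw}$ towards two of the grid neighbours of $v$ and $q$ to the other two, in one of the patterns (Q1) $p$: $(i-1,j),(i,j-1)$, $q$: $(i+1,j),(i,j+1)$; (Q2) $p$: $(i,j+1),(i-1,j)$,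 $q$: $(i,j-1),(i+1,j)$; (Q3) $p$: $(i-1,j),(i+1,j)$, $q$: $(i,j-1),(i,j+1)$. For each grid edge $vw$, $P_{vw}$ is the (possibly empty) path of internal vertices of $\overline{P}_{vw}$; for each grid vertex $v$ of degree less than $4$, $P_v$ is the one-vertex path on $v$; $\{V(P_\mu):\mu\in\mathrm{VE}(G_k)\}$ is the grid-partition. $\mathrm{int}_r(G_k)$ is the subgraph of $G_k$ induced on $\{1+r,\dots,k-r\}^2$, and $\mathrm{int}_r(G):=\bigcup_{\mu\in\mathrm{VE}(\mathrm{int}_r(G_k))}V(P_\mu)$. Boxes: for a vertex $v=(i,j)$ of $G_k$, $B_r(v):=(\{i-r,\dots,i+r\}\times\{j-r,\dots,j+r\})\cap V(G_k)$; for an edge $vw$, $B_r(vw):=B_r(v)\cup B_r(w)$; $G_r(\mu):=G_k[B_r(\mu)]$; $\tilde{B}_r(\mu):=\bigcup_{\nu\in\mathrm{VE}(G_r(\mu))}V(P_\nu)$; for $v\in V(G)$, $\tilde{B}_r(v):=\tilde{B}_r(\mu_v)$ where $\mu_v$ is the unique object with $v\in V(P_{\mu_v})$. For a vertex colouring $\varphi$: $\varphi(V(G))$ is the set of colours used; $\varphi^{-1}(\alpha):=\{v\in V(G):\varphi(v)=\alpha\}$; $\varphi_{\mathcal{P}}(\mu):=\{\varphi(v):v\in V(P_\mu)\}$; $\varphi_{\mathcal{P}}^{-1}(A):=\{\mu\in\mathrm{VE}(G_k):A\cap\varphi_{\mathcal{P}}(\mu)\neq\emptyset\}$. *)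

From mathcomp Require Import all_boot.
From Stdlib Require Import Reals.
Set Implicit Arguments. Unset Strict Implicit. Unset Printing Implicit Defensive.

(* The grid G_k.  Coordinates are 0-indexed: the paper's vertex (i,j),     *)
(* 1 <= i,j <= k, is our (i-1, j-1) : 'I_k * 'I_k.                         *)
(* An object of VE(G_k) is encoded as (v, None) for the vertex v, and      *)
(* (v, Some false) for the edge v -- v+(1,0), (v, Some true) for the edge  *)
(* v -- v+(0,1); the latter two are genuine edges only if that neighbour   *)
(* exists (see [gvalid]).                                                  *)
Definition gvert (k : nat) := ('I_k * 'I_k)%type.
Definition gobj (k : nat) := (gvert k * option bool)%type.

Definition gvalid k (o : gobj k) : bool :=
  match o.2 with
  | None => true
  | Some false => (o.1.1 : nat).+1 < k
  | Some true => (o.1.2 : nat).+1 < k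
  end.

Definition VE k : {set gobj k} := [set o | gvalid o].

Definition gends k (o : gobj k) : seq (nat * nat) :=
  let a := (o.1.1 : nat) in let b := (o.1.2 : nat) in
  match o.2 with
  | None => [:: (a, b)]
  | Some false => [:: (a, b); (a.+1, b)]
  | Some true => [:: (a, b); (a, b.+1)]
  end.

(* a grid vertex has degree < 4 in G_k iff it lies on the boundary *)
Definition gboundary k (v : gvert k) : bool :=
  [|| (v.1 : nat) == 0, (v.1 : nat) == k.-1, (v.2 : nat) == 0 | (v.2 : nat) == k.-1].

(* directions from a grid vertex (i,j): N = (i-1,j), W = (i,j-1),
   S = (i+1,j), E = (i,j+1) *)
Inductive gdir := DN | DW | DS | DE.

Inductive pattern := Q1 | Q2 | Q3.

(* [pside p d] is true iff, in pattern p, the neighbour in direction d is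
   attached to the endpoint "p" (position 0) of P_v, false if to "q". *)
Definition pside (p : pattern) (d : gdir) : bool :=
  match p, d with
  | Q1, DN | Q1, DW => true
  | Q2, DE | Q2, DN => true
  | Q3, DN | Q3, DS => true
  | _, _ => false
  end.

(* A k x k pseudogrid on the finite vertex type V.  Each vertex x of G     *)
(* lies on the path P_mu for mu = pobj x, at position ppos x along it;     *)
(* plen mu is the number of vertices of P_mu.  For a grid edge e = vw,     *)
(* P_e is the path of internal vertices of the subdivided path from v      *)
(* (position 0 side) to w.  For a grid vertex v, P_v runs from p (pos 0)  *)
(* to q (pos plen-1), and ppat v is its attachment pattern.                *)
Record pseudogrid (k : nat) (V : finType) := Pseudogrid {
  pobj : V -> gobj k;
  ppos : V -> nat;
  plen : gobj k -> nat;
  ppat : gvert k -> pattern;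
  pobj_valid : forall x, gvalid (pobj x);
  ppos_lt : forall x, ppos x < plen (pobj x);
  ppos_inj : forall x y, pobj x = pobj y -> ppos x = ppos y -> x = y;
  ppos_surj : forall o i, gvalid o -> i < plen o ->
                exists x, pobj x = o /\ ppos x = i;
  plen_vert : forall v : gvert k, 0 < plen (v, None);
  plen_bound : forall v : gvert k, gboundary v -> plen (v, None) = 1
}.

Section PseudogridGraph.
Variables (k : nat) (V : finType) (G : pseudogrid k V).

Definition attach_pos (v : gvert k) (d : gdir) : nat :=
  if pside (ppat G v) d then 0 else (plen G (v, None)).-1.

Definition other_end (v w : gvert k) (b : bool) : bool :=
  ((w.1 : nat) == v.1 + ~~ b) && ((w.2 : nat) == v.2 + b).

Definition padj0 (x y : V) : Prop :=
  (pobj G x = pobj G y /\ ppos G y = (ppos G x).+1)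
  \/ (* P_v -> first internal vertex of the subdivided edge (v, Some b) *)
  (exists v b, pobj G x = (v, None) /\ pobj G y = (v, Some b) /\
     ppos G y = 0 /\ ppos G x = attach_pos v (if b then DE else DS))
  \/ (* last internal vertex of (v, Some b) -> P_w, w the other endpoint *)
  (exists v w b, other_end v w b /\ pobj G x = (v, Some b) /\
     pobj G y = (w, None) /\ ppos G x = (plen G (v, Some b)).-1 /\
     ppos G y = attach_pos w (if b then DW else DN))
  \/ (* unsubdivided edge (v, Some b): P_v -> P_w directly *)
  (exists v w b, other_end v w b /\ gvalid (v, Some b) /\
     plen G (v, Some b) = 0 /\
     pobj G x = (v, None) /\ pobj G y = (w, None) /\
     ppos G x = attach_pos v (if b then DE else DS) /\
     ppos G y = attach_pos w (if b then DW else DN)).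

Definition padj (x y : V) : Prop := padj0 x y \/ padj0 y x.

End PseudogridGraph.

(* a grid vertex (as nat pair) lies in {1+r,...,k-r}^2 (0-indexed:
   {r,...,k-1-r}^2) *)
Definition in_int_pt (k r : nat) (u : nat * nat) : bool :=
  [&& r <= u.1, u.1 + r < k, r <= u.2 & u.2 + r < k].

(* mu in VE(int_r(G_k)) : int_r(G_k) is an induced subgraph *)
Definition VE_int (k r : nat) : {set gobj k} :=
  [set o | gvalid o & all (in_int_pt k r) (gends o)].

Definition int_G k (V : finType) (G : pseudogrid k V) (r : nat) : {set V} :=
  [set x | pobj G x \in VE_int k r].

Definition in_box k (r : nat) (mu : gobj k) (u : nat * nat) : bool :=
  has (fun w : nat * nat =>
         (maxn u.1 w.1 - minn u.1 w.1 <= r) && (maxn u.2 w.2 - minn u.2 w.2 <= r))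
      (gends mu).

Definition VE_box k (r : nat) (mu : gobj k) : {set gobj k} :=
  [set o | gvalid o & all (in_box r mu) (gends o)].

Definition tbox k (V : finType) (G : pseudogrid k V) (r : nat) (mu : gobj k)
  : {set V} := [set x | pobj G x \in VE_box r mu].

Definition tbox_v k (V : finType) (G : pseudogrid k V) (r : nat) (v : V)
  : {set V} := tbox G r (pobj G v).

Definition colours (V C : finType) (phi : V -> C) : {set C} := [set phi x | x in V].

Definition colclass (V C : finType) (phi : V -> C) (a : C) : {set V} :=
  [set x | phi x == a].

Definition phiP k (V C : finType) (G : pseudogrid k V) (phi : V -> C)
  (mu : gobj k) : {set C} := [set phi x | x in [set x | pobj G x == mu]].

Definition phiP_inv k (V C : finType) (G : pseudogrid k V) (phi : V -> C)
  (A : {set C}) : {set gobj k} :=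
  [set mu in VE k | [exists a in A, a \in phiP G phi mu]].

(* Cut the grid into (r+1) x (r+1) cells, placing each object of VE(G_k) in
   the cell of its base vertex; if y lies in the box of radius r of x, the
   objects carrying x and y lie in equal or adjacent cells.  Give every colour
   two slots, and every slot 144 candidate cells containing an interior vertex
   of its colour, all candidates distinct: as a cell holds at most 3(r+1)^2
   objects, the density hypothesis with d = 2 * 144 * 3(r+1)^2 implies Hall's
   condition for this assignment.  Each cell is adjacent to at most 9 cells and
   144 = 16 * 9, so a counting form of the symmetric Lovasz Local Lemma picks
   one candidate per slot with no two picked cells adjacent.  A vertex of the
   slot's colour in each picked cell gives S: two vertices of each colour, and
   no other vertex of S in the box of any of them. *)

From mathcomp Require Import all_boot zify.
From Stdlib Require Import Reals Lra.
Set Implicit Arguments. Unset Strict Implicit. Unset Printing Implicit Defensive.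

Section Hall.
Variables (L R : finType) (y0 : R).
Implicit Types (rel : L -> R -> bool) (A B : {set L}) (Y : {set R}).

Definition nbhd rel A : {set R} := [set y | [exists x in A, rel x y]].

Definition restrict rel Y x y := rel x y && (y \in Y).

Definition hall_cond rel A := forall B, B \subset A -> #|B| <= #|nbhd rel B|.

Definition matching_on rel A (f : L -> R) :=
  {in A, forall x, rel x (f x)} /\ {in A &, injective f}.

Lemma nbhdU rel A B : nbhd rel (A :|: B) = nbhd rel A :|: nbhd rel B.
Proof.
apply/setP=> y; rewrite !inE; apply/existsP/orP.
  by case=> x /andP[]; rewrite inE => /orP[] xAB rxy; [left|right];
    apply/existsP; exists x; rewrite xAB.
by case=> /existsP[x /andP[xAB rxy]]; exists x; rewrite inE xAB ?orbT.
Qed.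

Lemma nbhdS rel A B : A \subset B -> nbhd rel A \subset nbhd rel B.
Proof.
move=> /subsetP sAB; apply/subsetP=> y; rewrite !inE => /existsP[x /andP[xA rxy]].
by apply/existsP; exists x; rewrite sAB.
Qed.

Lemma nbhd_restrict rel Y A : nbhd (restrict rel Y) A = nbhd rel A :&: Y.
Proof.
apply/setP=> y; rewrite !inE; apply/existsP/andP.
  by case=> x /and3P[xA rxy yY]; split=> //; apply/existsP; exists x; rewrite xA.
by case=> /existsP[x /andP[xA rxy]] yY; exists x; rewrite /restrict xA rxy.
Qed.

Lemma hall_cond_sub rel A B :
  hall_cond rel A -> B \subset A -> hall_cond (restrict rel (nbhd rel B)) B.
Proof.
move=> hall sBA C sCB; rewrite nbhd_restrict (setIidPl (nbhdS rel sCB)).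
exact/hall/(subset_trans sCB).
Qed.

Lemma hall_cond_tight_compl rel A B : hall_cond rel A -> B \subset A ->
  #|nbhd rel B| <= #|B| -> hall_cond (restrict rel (~: nbhd rel B)) (A :\: B).
Proof.
move=> hall sBA tightB C sC; rewrite nbhd_restrict -setDE.
have disjBC : B :&: C = set0.
  apply/setP=> x; rewrite !inE; apply/negbTE/andP=> -[xB xC].
  by move/subsetP: sC => /(_ x xC); rewrite inE xB.
have := hall (B :|: C); rewrite subUset sBA (subset_trans sC (subsetDl _ _)) => /(_ isT).
rewrite nbhdU cardsU disjBC cards0 subn0 cardsU cardsD => le_hall.
have := subset_leq_card (subsetIl (nbhd rel C) (nbhd rel B)); rewrite setIC; lia.
Qed.

Lemma hall_cond_surplus rel A y :
  (forall B, B \subset A -> B != set0 -> #|B| < #|nbhd rel B|) ->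
  hall_cond (restrict rel (~: [set y])) A.
Proof.
move=> surplus B sBA; rewrite nbhd_restrict -setDE.
have [->|nzB] := eqVneq B set0; first by rewrite cards0.
by have := surplus B sBA nzB; have := cardsD1 y (nbhd rel B); lia.
Qed.

Lemma matching_glue rel Y A B f1 f2 :
  matching_on (restrict rel Y) A f1 -> matching_on (restrict rel (~: Y)) B f2 ->
  matching_on rel (A :|: B) (fun x => if x \in A then f1 x else f2 x).
Proof.
move=> [rel1 inj1] [rel2 inj2].
have inY x : x \in A -> f1 x \in Y by move/rel1 => /andP[].
have notinY x : x \in B -> f2 x \notin Y by move/rel2 => /andP[_]; rewrite inE.
split=> [x|x z]; rewrite !inE.
  by case: ifP => [xA _|_ /= xB]; [case/andP: (rel1 x xA) | case/andP: (rel2 x xB)].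
move=> xAB zAB; case: ifP => xA; case: ifP => zA.
- exact: inj1.
- have zB : z \in B by move: zAB; rewrite zA.
  by move=> fxz; move: (notinY z zB); rewrite -fxz inY.
- have xB : x \in B by move: xAB; rewrite xA.
  by move=> fxz; move: (notinY x xB); rewrite fxz inY.
- by apply: inj2; [move: xAB; rewrite xA | move: zAB; rewrite zA].
Qed.

(* Halmos--Vaughan: split along a nonempty proper tight set if there is one,
   otherwise match any edge x0 y and recurse on the rest. *)
Theorem Hall_marriage rel A : hall_cond rel A -> exists f, matching_on rel A f.
Proof.
have [m] := ubnP #|A|; elim: m => // m IH in rel A *; rewrite ltnS => leAm hall.
have [->|[x0 x0A]] := set_0Vmem A; first by exists (fun=> y0); split=> x; rewrite inE.
have [/existsP[B /and4P[sBA nzB neBA tightB]] | ] := boolP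
  [exists B : {set L}, [&& B \subset A, B != set0, B != A & #|nbhd rel B| <= #|B|]].
- have ltBA : #|B| < #|A| by rewrite proper_card // properEneq neBA.
  have [f1 match1] := IH _ B (leq_trans ltBA leAm) (hall_cond_sub hall sBA).
  have ltDA : #|A :\: B| < m.
    rewrite (leq_trans _ leAm) // cardsD (setIidPr sBA) -subn_gt0 subKn ?subset_leq_card //.
    by rewrite card_gt0.
  have [f2 match2] := IH _ (A :\: B) ltDA (hall_cond_tight_compl hall sBA tightB).
  exists (fun x => if x \in B then f1 x else f2 x).
  by rewrite -(setID A B) (setIidPr sBA); exact: matching_glue match1 match2.
- rewrite negb_exists => /forallP surplus.
  have [y y_nbhd] : exists y, y \in nbhd rel [set x0].
    by apply/set0Pn; rewrite -card_gt0 (leq_trans _ (hall _ _)) ?cards1 ?sub1set.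
  have rx0y : rel x0 y by move: y_nbhd; rewrite inE => /existsP[x /andP[/set1P-> ]].
  have ltDA : #|A :\ x0| < m by move: leAm; rewrite (cardsD1 x0 A) x0A.
  have surplusD B : B \subset A :\ x0 -> B != set0 -> #|B| < #|nbhd rel B|.
    move=> sB nzB; have neBA : B != A.
      by apply: contraTneq sB => ->; apply/subsetPn; exists x0; rewrite ?inE ?eqxx.
    by have := surplus B; rewrite (subset_trans sB (subsetDl _ _)) nzB neBA ltnNge.
  have [f2 match2] := IH _ (A :\ x0) ltDA (hall_cond_surplus y surplusD).
  exists (fun x => if x \in [set x0] then y else f2 x); rewrite -(setD1K x0A).
  apply: matching_glue match2; split=> [x /set1P->|x z /set1P-> /set1P->] //.
  by rewrite /restrict rx0y set11.
Qed.

End Hall.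

Lemma card_le_sum_cover (T I : finType) (A : {set T}) (J : {set I}) (F : I -> {set T}) :
  (forall x, x \in A -> exists2 i, i \in J & x \in F i) ->
  #|A| <= \sum_(i in J) #|F i|.
Proof.
move=> cover; apply: (leq_trans (subset_leq_card (_ : A \subset \bigcup_(i in J) F i))).
  by apply/subsetP=> x /cover[i iJ xF]; apply/bigcupP; exists i.
elim/big_rec2: _ => [|i m U _ leUm]; first by rewrite cards0.
by rewrite (leq_trans (leq_card_setU _ _)) // leq_add2l.
Qed.

Section PairEvents.
Variables (P : finType) (n : nat).
Local Notation event := ((P * 'I_n) * (P * 'I_n))%type.
Implicit Types (g : {ffun P -> 'I_n}) (e f : event) (S : {set event}).

Definition occurs g e := (g e.1.1 == e.1.2) && (g e.2.1 == e.2.2).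

Definition avoiding S := [set g | [forall e in S, ~~ occurs g e]].

Definition touches (p : P) e := (e.1.1 == p) || (e.2.1 == p).

Lemma avoidingS S S' : S \subset S' -> avoiding S' \subset avoiding S.
Proof.
move=> /subsetP sSS'; apply/subsetP=> g; rewrite !inE => /forall_inP avoid.
by apply/forall_inP=> e /sSS' /avoid.
Qed.

(* Resetting g at the two points of e does not affect the events of S. *)
Lemma card_avoiding_occurs S e : e.1.1 != e.2.1 ->
  (forall f, f \in S -> ~~ touches e.1.1 f && ~~ touches e.2.1 f) ->
  #|avoiding S| = n * n * #|[set g in avoiding S | occurs g e]|.
Proof.
move=> neq far.
pose upd g (ab : 'I_n * 'I_n) : {ffun P -> 'I_n} :=
  [ffun p => if p == e.1.1 then ab.1 else if p == e.2.1 then ab.2 else g p].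
have occurs_upd g ab f : f \in S -> occurs (upd g ab) f = occurs g f.
  move/far; rewrite /touches !negb_or => /andP[/andP[n11 n21] /andP[n12 n22]].
  rewrite /occurs !ffunE (negbTE n11) (negbTE n21).
  by rewrite eq_sym (negbTE n12) eq_sym (negbTE n22).
have avoiding_upd g ab :
    [forall f in S, ~~ occurs (upd g ab) f] = [forall f in S, ~~ occurs g f].
  by apply: eq_forallb_in => f /occurs_upd ->.
pose Mset := [set g in avoiding S | occurs g e].
have upd_inj : {in setX [set: 'I_n * 'I_n] Mset &, injective (fun t => upd t.2 t.1)}.
  move=> [[a b] g] [[a' b'] g']; rewrite !inE /= => /andP[_ /andP[/eqP g1 /eqP g2]].
  move=> /andP[_ /andP[/eqP g1' /eqP g2']] eq_upd.
  have eq_at p := congr1 (fun h : {ffun P -> 'I_n} => h p) eq_upd.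
  have := eq_at e.1.1; have := eq_at e.2.1; rewrite /= !ffunE eqxx eq_sym (negbTE neq) eqxx.
  move=> /= -> ->; congr (_, _).
  apply/ffunP=> p; have := eq_at p; rewrite /= !ffunE.
  by case: eqP => [->|_]; [rewrite g1 g1'|case: eqP => [->|//]; rewrite g2 g2'].
have -> : n * n * #|Mset| = #|setX [set: 'I_n * 'I_n] Mset|.
  by rewrite cardsX cardsT card_prod card_ord.
rewrite -(card_in_imset upd_inj); apply: eq_card => g.
rewrite inE; apply/idP/imsetP => [avoid_g|[[ab h]]].
  exists ((g e.1.1, g e.2.1), upd g (e.1.2, e.2.2)).
    rewrite !inE /= avoiding_upd avoid_g /occurs !ffunE eqxx.
    by rewrite [e.2.1 == _]eq_sym (negbTE neq) !eqxx.
  apply/ffunP=> p; rewrite !ffunE.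
  by case: eqP => [->//|_]; case: eqP => [->//|_].
by rewrite !inE /= => /andP[h_avoid _] ->; rewrite avoiding_upd.
Qed.

Lemma card_avoiding_le_sum S S' : S' \subset S ->
  #|avoiding S'| <=
    #|avoiding S| + \sum_(f in S :\: S') #|[set g in avoiding S' | occurs g f]|.
Proof.
move=> sS'S; rewrite -(cardsID (avoiding S) (avoiding S')).
rewrite leq_add ?subset_leq_card ?subsetIr //.
apply: card_le_sum_cover => g; rewrite inE => /andP[g_bad g_avoid].
move: g_bad; rewrite inE negb_forall_in => /existsP[f /andP[fS /negPn occ]].
exists f; last by rewrite inE g_avoid occ.
rewrite inE fS andbT; apply: contraL g_avoid => fS'.
by rewrite inE negb_forall_in; apply/existsP; exists f; rewrite fS' occ.
Qed.

Variables (Sb : {set event}) (L : nat).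
Hypothesis Sb_proper : forall e, e \in Sb -> e.1.1 != e.2.1.
Hypothesis Sb_degree : forall p, #|[set e in Sb | touches p e]| <= L.
Hypothesis n_gt1 : 1 < n.
Hypothesis n_large : 8 * L <= n * n.

Lemma avoiding_occurs_le S e : S \subset Sb -> e \in Sb ->
  n * n * #|[set g in avoiding S | occurs g e]| <= 2 * #|avoiding S|.
Proof.
have [m] := ubnP #|S|; elim: m => // m IH in S e *; rewrite ltnS => leSm sSSb eSb.
pose far := [set f in S | ~~ touches e.1.1 f && ~~ touches e.2.1 f].
have sfS : far \subset S by apply/subsetP=> f; rewrite inE => /andP[].
have uniform : #|avoiding far| = n * n * #|[set g in avoiding far | occurs g e]|.
  by apply: card_avoiding_occurs => [|f]; [exact: Sb_proper | rewrite inE => /andP[]].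
have occurs_far :
    #|[set g in avoiding S | occurs g e]| <= #|[set g in avoiding far | occurs g e]|.
  apply/subset_leq_card/subsetP=> g; rewrite [g \in [set _ in _ | _]]inE.
  by case/andP=> /(subsetP (avoidingS sfS)) ? occ; rewrite inE occ andbT.
have near_small : 4 * #|S :\: far| <= n * n.
  suff : #|S :\: far| <= L + L by lia.
  apply: leq_trans (leq_add (Sb_degree e.1.1) (Sb_degree e.2.1)).
  apply: leq_trans (leq_card_setU _ _); apply/subset_leq_card/subsetP=> f.
  rewrite !inE => /andP[]; case: (f \in S) (subsetP sSSb f) => // /(_ isT) -> /=.
  by rewrite negb_and !negbK.
have near_occurs f : f \in S :\: far ->
    n * n * #|[set g in avoiding far | occurs g f]| <= 2 * #|avoiding far|.
  case/setDP=> fS f_near; apply: IH; last exact: subsetP sSSb f fS.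
    rewrite (leq_trans _ leSm) // proper_card // properEneq sfS andbT.
    by apply: contraNneq f_near => ->.
  exact: subset_trans sfS sSSb.
have sum_occurs : n * n * \sum_(f in S :\: far) #|[set g in avoiding far | occurs g f]|
    <= #|S :\: far| * (2 * #|avoiding far|).
  by rewrite big_distrr -sum_nat_const leq_sum.
have far_le : #|avoiding far| <= 2 * #|avoiding S|.
  have nn_gt0 : 0 < n * n by rewrite muln_gt0 (ltnW n_gt1).
  rewrite -(leq_pmul2l nn_gt0).
  have := leq_mul (leqnn (n * n)) (card_avoiding_le_sum sfS); rewrite mulnDr.
  have := leq_mul near_small (leqnn #|avoiding far|).
  lia.
by rewrite (leq_trans _ far_le) // uniform leq_mul2l occurs_far orbT.
Qed.

Lemma avoidingD1 S e : e \in S ->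
  avoiding S = avoiding (S :\ e) :\: [set g | occurs g e].
Proof.
move=> eS; apply/setP=> g; rewrite !inE andbC.
apply/forall_inP/andP => [avoid | [avoid no_e] f fS].
  by split; [apply/forall_inP=> f; rewrite !inE => /andP[_]; apply: avoid | exact: avoid].
have [-> //|ne] := eqVneq f e.
by move/forall_inP: avoid; apply; rewrite !inE ne.
Qed.

Lemma exists_avoiding : exists g, forall e, e \in Sb -> ~~ occurs g e.
Proof.
suff avoiding_gt0 S : S \subset Sb -> 0 < #|avoiding S|.
  have := avoiding_gt0 Sb (subxx _); rewrite card_gt0 => /set0Pn[g].
  by rewrite inE => /forall_inP; exists g.
have [m] := ubnP #|S|; elim: m => // m IH in S *; rewrite ltnS => leSm sSSb.
have [->|[e eS]] := set_0Vmem S.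
  apply/card_gt0P; exists [ffun=> Ordinal (ltnW n_gt1)].
  by rewrite inE; apply/forall_inP=> f; rewrite inE.
have sS'Sb : S :\ e \subset Sb := subset_trans (subsetDl _ _) sSSb.
have := avoiding_occurs_le sS'Sb (subsetP sSSb e eS).
have := IH (S :\ e); rewrite (cardsD1 e S) eS in leSm => /(_ leSm sS'Sb).
rewrite -(cardsID [set g | occurs g e] (avoiding (S :\ e))) -avoidingD1 // -setIdE.
have := leq_mul n_gt1 n_gt1; move: (n * n) => N.
nia.
Qed.

End PairEvents.

Theorem exists_independent_transversal (P : finType) (n D : nat)
    (conflict : rel (P * 'I_n)) :
  symmetric conflict -> (forall o, #|[set o' | conflict o o']| <= D) ->
  1 < n -> 16 * D <= n ->
  exists g : {ffun P -> 'I_n}, forall p q, p != q -> ~~ conflict (p, g p) (q, g q).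
Proof.
move=> conflictC degD n_gt1 n_large.
pose from p := [set e : (P * 'I_n) * (P * 'I_n) | (e.1.1 == p) && conflict e.1 e.2].
have card_from p : #|from p| <= n * D.
  have -> : n * D = \sum_(a in [set: 'I_n]) D by rewrite sum_nat_const cardsT card_ord.
  apply: (@leq_trans (\sum_(a in [set: 'I_n])
                        #|[set ((p, a), o) | o in [set o | conflict (p, a) o]]|)).
    apply: card_le_sum_cover => -[[p' a] o]; rewrite inE /= => /andP[/eqP-> pao].
    by exists a; [rewrite inE | apply: imset_f; rewrite inE].
  by apply: leq_sum => a _; rewrite card_imset ?degD // => o o' [].
pose Sb := [set e : (P * 'I_n) * (P * 'I_n) | (e.1.1 != e.2.1) && conflict e.1 e.2].
have [g avoid] : exists g, forall e, e \in Sb -> ~~ occurs g e.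
  apply: (@exists_avoiding P n Sb (n * D + n * D)) => //; last by nia.
- by move=> e; rewrite inE => /andP[].
- move=> p; apply: leq_trans (leq_add (card_from p) (card_from p)).
  pose swap (e : (P * 'I_n) * (P * 'I_n)) := (e.2, e.1).
  have swap_inj : injective swap by move=> [? ?] [? ?] [-> ->].
  rewrite -{2}(@card_preimset _ swap (from p) swap_inj).
  apply: leq_trans (leq_card_setU _ _); apply/subset_leq_card/subsetP=> e.
  rewrite !inE /touches /= [conflict e.2 _]conflictC.
  by case/andP=> /andP[_ ->] /orP[] ->; rewrite ?orbT.
exists g => p q neq_pq; apply/negP => conf.
by have := avoid ((p, g p), (q, g q)); rewrite inE /occurs neq_pq conf !eqxx => /(_ isT).
Qed.

Section Cells.
Variable k : nat.
Implicit Types (c : gvert k) (mu : gobj k).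

Definition cell (s : nat) (v : gvert k) : gvert k :=
  (Ordinal (leq_ltn_trans (leq_div v.1 s) (ltn_ord v.1)),
   Ordinal (leq_ltn_trans (leq_div v.2 s) (ltn_ord v.2))).

Definition near_cells c c' : bool :=
  [&& (c.1 : nat) <= c'.1 + 1, (c'.1 : nat) <= c.1 + 1,
      (c.2 : nat) <= c'.2 + 1 & (c'.2 : nat) <= c.2 + 1].

Lemma near_cellsC : symmetric near_cells.
Proof. by move=> c c'; apply/and4P/and4P => -[]. Qed.

Lemma card_near_cells c : #|[set c' | near_cells c c']| <= 9.
Proof.
pose offset c' : 'I_3 * 'I_3 := (inord (c'.1 + 1 - c.1), inord (c'.2 + 1 - c.2)).
have offset_inj : {in [set c' | near_cells c c'] &, injective offset}.
  move=> [x1 y1] [x2 y2]; rewrite !inE /offset /near_cells /=.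
  move=> /and4P[? ? ? ?] /and4P[? ? ? ?] [].
  move=> /(congr1 (@nat_of_ord 3)) + /(congr1 (@nat_of_ord 3)); rewrite !inordK; try lia.
  by move=> e1 e2; congr (_, _); apply: ord_inj; lia.
by rewrite (leq_trans (@leq_card_in _ _ offset _ offset_inj)) // card_prod !card_ord.
Qed.

Lemma leq_divD1 a b s : 0 < s -> a <= b + s -> a %/ s <= b %/ s + 1.
Proof.
move=> s_gt0 le_ab; apply: leq_trans (leq_div2r s le_ab) _.
by have := divnDMl 1 b s_gt0; rewrite mul1n => ->; rewrite addnC.
Qed.

Lemma card_le_cells s (M : {set gobj k}) :
  #|M| <= #|[set cell s.+1 mu.1 | mu in M]| * (3 * (s.+1 * s.+1)).
Proof.
pose code mu := (cell s.+1 mu.1,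
                 ((inord (mu.1.1 %% s.+1) : 'I_s.+1, inord (mu.1.2 %% s.+1) : 'I_s.+1), mu.2)).
have -> : #|[set cell s.+1 mu.1 | mu in M]| * (3 * (s.+1 * s.+1)) =
          #|setX [set cell s.+1 mu.1 | mu in M] [set: ('I_s.+1 * 'I_s.+1) * option bool]|.
  by rewrite cardsX cardsT !card_prod card_option card_bool !card_ord; lia.
rewrite -(@card_in_imset _ _ code M).
  apply/subset_leq_card/subsetP=> _ /imsetP[mu muM ->].
  by rewrite in_setX in_setT andbT; apply: imset_f.
move=> [[a b] o] [[a' b'] o'] _ _ [ea eb ma mb ->].
have mod_eq (u u' : nat) : inord (u %% s.+1) = inord (u' %% s.+1) :> 'I_s.+1 ->
    u %% s.+1 = u' %% s.+1.
  by move/(congr1 val); rewrite /= !inordK // ltn_pmod.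
congr (_, _, _); apply: val_inj.
  by rewrite /= (divn_eq a s.+1) (divn_eq a' s.+1) ea (mod_eq _ _ ma).
by rewrite /= (divn_eq b s.+1) (divn_eq b' s.+1) eb (mod_eq _ _ mb).
Qed.

Lemma in_box_base r mu (u : nat * nat) : in_box r mu u ->
  [/\ u.1 <= mu.1.1 + r.+1, (mu.1.1 : nat) <= u.1 + r,
      u.2 <= mu.1.2 + r.+1 & (mu.1.2 : nat) <= u.2 + r].
Proof.
case: mu => [[a b] o]; case: u => [u1 u2]; rewrite /in_box /gends /=.
by case: o => [[]|] /=; rewrite ?orbF; try case/orP; move=> /andP[? ?]; split; lia.
Qed.

End Cells.

Lemma tbox_near_cells k (V : finType) (G : pseudogrid k V) r (x y : V) :
  y \in tbox_v G r x -> near_cells (cell r.+1 (pobj G x).1) (cell r.+1 (pobj G y).1).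
Proof.
rewrite !inE => /andP[_]; case: (pobj G y) => [[a b] o].
have -> : gends (a, b, o) = ((a : nat), (b : nat)) :: behead (gends (a, b, o)).
  by case: o => [[]|].
case/andP=> /in_box_base[/= ? ? ? ?] _.
by apply/and4P; split; apply: leq_divD1; rewrite //=; lia.
Qed.

Section SparseSelection.
Variables (k r : nat) (V : finType) (G : pseudogrid k V) (Col : finType) (phi : V -> Col).
Hypothesis k_gt0 : 0 < k.
Hypothesis dense : forall A : {set Col}, A \subset colours phi ->
  2 * 144 * (3 * (r.+1 * r.+1)) * #|A| <= #|phiP_inv G phi A :&: VE_int k r|.

Local Notation slot := ({a | a \in colours phi} * bool)%type.

Definition cell_of (x : V) := cell r.+1 (pobj G x).1.

Definition hosts (o : slot * 'I_144) (c : gvert k) :=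
  [exists x in int_G G r, (cell_of x == c) && (phi x == val o.1.1)].

Lemma hosts_hall_cond : hall_cond hosts [set: slot * 'I_144].
Proof.
move=> A _; pose Acol := [set o.1.1 | o in A].
have A_le : #|A| <= #|Acol| * 2 * 144.
  have -> : #|Acol| * 2 * 144 = #|setX (setX Acol [set: bool]) [set: 'I_144]|.
    by rewrite !cardsX !cardsT card_bool card_ord.
  apply/subset_leq_card/subsetP=> -[[u b] i] oA.
  by rewrite !in_setX !in_setT !andbT; apply: imset_f oA.
have colours_le : #|Acol| * (2 * 144 * (3 * (r.+1 * r.+1)))
    <= #|phiP_inv G phi (val @: Acol) :&: VE_int k r|.
  rewrite mulnC -(card_imset _ val_inj); apply: dense.
  by apply/subsetP=> _ /imsetP[u _ ->]; apply: valP.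
have objects_le : #|phiP_inv G phi (val @: Acol) :&: VE_int k r|
    <= #|nbhd hosts A| * (3 * (r.+1 * r.+1)).
  apply: leq_trans (card_le_cells r _) (leq_mul _ (leqnn _)).
  apply/subset_leq_card/subsetP=> _ /imsetP[mu + ->]; rewrite !inE.
  case/andP=> /andP[_ /existsP[_ /andP[/imsetP[_ /imsetP[o oA ->] ->]]]] + mu_int.
  case/imsetP=> x; rewrite inE => /eqP x_mu phix.
  apply/existsP; exists o; rewrite oA; apply/existsP; exists x.
  by rewrite /cell_of !inE x_mu mu_int phix !eqxx.
have := leq_trans colours_le objects_le.
rewrite mulnA leq_pmul2r // => ?; lia.
Qed.

Lemma exists_host_assignment :
  exists h : slot * 'I_144 -> gvert k, injective h /\ forall o, hosts o (h o).
Proof.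
have [h [h_hosts h_inj]] := Hall_marriage (Ordinal k_gt0, Ordinal k_gt0) hosts_hall_cond.
by exists h; split=> [o o'|o]; [apply: h_inj; rewrite inE | apply: h_hosts; rewrite inE].
Qed.

Lemma exists_sparse_selection : exists S : {set V},
  S \subset int_G G r /\
  (forall a, a \in colours phi -> #|colclass phi a :&: S| = 2) /\
  (forall v, v \in S -> #|tbox_v G r v :&: S| <= 2).
Proof.
have [h [h_inj h_hosts]] := exists_host_assignment.
have [g g_spread] : exists g : {ffun slot -> 'I_144},
    forall p q, p != q -> ~~ near_cells (h (p, g p)) (h (q, g q)).
  apply: (@exists_independent_transversal _ _ 9 (fun o o' => near_cells (h o) (h o'))) => //.
    by move=> o o'; apply: near_cellsC.
  move=> o; apply: leq_trans (card_near_cells (h o)).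
  rewrite -(card_imset _ h_inj); apply/subset_leq_card/subsetP=> _ /imsetP[o' + ->].
  by rewrite !inE.
have /fin_all_exists[x x_spec] : forall p : slot, exists y : V,
    [/\ y \in int_G G r, cell_of y = h (p, g p) & phi y = val p.1].
  move=> p; have /exists_inP[y y_int /andP[/eqP y_cell /eqP y_col]] := h_hosts (p, g p).
  by exists y.
exists [set x p | p in [set: slot]]; split; [|split].
- by apply/subsetP=> _ /imsetP[p _ ->]; case: (x_spec p).
- move=> a a_col; pose u : {a | a \in colours phi} := exist _ a a_col.
  have -> : colclass phi a :&: [set x p | p in [set: slot]] =
            [set x (u, true); x (u, false)].
    apply/setP=> y; rewrite !inE; apply/andP/orP => [[/eqP y_col /imsetP[p _ y_xp]]|].
      have p_u : p.1 = u by apply: val_inj; case: (x_spec p) => _ _ <-; rewrite -y_xp y_col.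
      by rewrite y_xp; case: p p_u {y_xp} => [? []] /= ->; [left|right].
    move=> y_u; have [b ->] : exists b, y = x (u, b) by case: y_u => /eqP->; eexists.
    by split; [case: (x_spec (u, b)) => _ _ -> | apply: imset_f].
  rewrite cards2; case: eqP => // /(congr1 cell_of).
  by case: (x_spec (u, true)) (x_spec (u, false)) => _ -> _ [_ -> _] /h_inj.
- move=> _ /imsetP[p _ ->]; rewrite (leq_trans _ (leqnSn 1)) // -(cards1 (x p)).
  apply/subset_leq_card/subsetP=> y /setIP[near_xp /imsetP[q _ y_xq]].
  apply/set1P; rewrite y_xq in near_xp *; have [-> //|neq] := eqVneq p q.
  have := tbox_near_cells near_xp; rewrite -/(cell_of _) -/(cell_of _).
  by case: (x_spec p) (x_spec q) => _ -> _ [_ -> _]; rewrite (negbTE (g_spread p q neq)).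
Qed.

End SparseSelection.

Lemma one_le_ln_INR r : 3 < r -> (1 <= ln (INR r))%R.
Proof.
move=> r_gt3; rewrite -(ln_exp 1); apply/Rlt_le/ln_increasing; first exact: exp_pos.
have /le_INR : (4 <= r)%coq_nat by apply/leP.
have := exp_le_3; rewrite /=; lra.
Qed.

Lemma INR_le_r4_ln (c d r : nat) : 3 < r -> d <= c * (r * r * r * r) ->
  (INR d <= INR c * INR r ^ 4 * ln (INR r))%R.
Proof.
move=> r_gt3 d_le; apply: (Rle_trans _ (INR c * INR r ^ 4)).
  have -> : (INR r ^ 4 = INR (r * r * r * r))%R by rewrite !mult_INR /=; ring.
  by rewrite -mult_INR; apply/le_INR/leP.
rewrite -{1}(Rmult_1_r (INR c * INR r ^ 4)); apply: Rmult_le_compat_l.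
  by apply/Rmult_le_pos/pow_le/pos_INR/pos_INR.
exact: one_le_ln_INR.
Qed.

Theorem lemma14 :
  exists C : R, forall r : nat, 10 <= r ->
  exists d : nat, (INR d <= C * INR r ^ 4 * ln (INR r))%R /\
  forall (k : nat), 1 <= k ->
  forall (V : finType) (G : pseudogrid k V) (Col : finType) (phi : V -> Col),
    (forall A : {set Col}, A \subset colours phi ->
       d * #|A| <= #|phiP_inv G phi A :&: VE_int k r|) ->
    exists S : {set V},
      S \subset int_G G r /\
      (forall a, a \in colours phi -> #|colclass phi a :&: S| = 2) /\
      (forall v, v \in S -> #|tbox_v G r v :&: S| <= 2).
Proof.
exists (INR 1000) => r r_ge10; exists (2 * 144 * (3 * (r.+1 * r.+1))); split.
  by apply: INR_le_r4_ln; nia.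
by move=> k k_gt0 V G Col phi dense; apply: exists_sparse_selection.
Qed.
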